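(* Assume (CVX), (SM), (QSM) and (SCO). Let $L_{\max}=\max\{L_1,\dots,L_n\}$, $\kappa=\ell/\mu$, and let $\tau\ge 1$, $R\ge 1$ be integers. Let the constant step-size satisfy $0<\gamma_k\equiv\gamma\le \frac{1}{\ell\tau+2(\tau-1)L_{\max}\sqrt{\kappa}}$. Then the iterates of deterministic (full-batch) PEARL-SGD satisfy $$\|\mathbf{x}_{\tau R}-\mathbf{x}_\star\|^2\le (1-\gamma\tau\mu\zeta)^R\,\|\mathbf{x}_0-\mathbf{x}_\star\|^2,$$ where $\zeta=2-\gamma\ell\tau-2(\tau-1)\gamma L_{\max}\sqrt{\kappa/3}$, which is positive under the stated step-size condition.
   Context: Setup. Let $n\ge1$, $d_1,\dots,d_n\ge1$, $D=d_1+\dots+d_n$. A joint action is $\mathbf{x}=(x^1,\dots,x^n)\in\mathbb{R}^D$ with $x^i\in\mathbb{R}^{d_i}$; $x^{-i}\in\mathbb{R}^{D-d_i}$ denotes all blocks except the $i$-th, and $f_i(x^i;x^{-i})=f_i(x^1,\dots,x^n)$. For each $i$, $f_i:\mathbb{R}^D\to\mathbb{R}$ is differentiable in $x^i$, and $\nabla f_i(x^i;x^{-i})$ denotes the gradient of $f_i$ with respect to $x^i$ only. The joint gradient operator is $\mathbb{F}(\mathbf{x})=(\nabla f_1(x^1;x^{-1}),\dots,\nabla f_n(x^n;x^{-n}))\in\mathbb{R}^D$. Assumptions. (CVX): for each $i$ and each $x^{-i}$, $f_i(\cdot;x^{-i})$ is convex on $\mathbb{R}^{d_i}$. (SM): for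 each $i$ there is $L_i>0$ with $\|\nabla f_i(x^i;x^{-i})-\nabla f_i(y^i;x^{-i})\|\le L_i\|x^i-y^i\|$ for all $x^i,y^i,x^{-i}$. (QSM): there is a unique $\mathbf{x}_\star$ with $\mathbb{F}(\mathbf{x}_\star)=0$, and $\mu>0$ with $\langle\mathbb{F}(\mathbf{x}),\mathbf{x}-\mathbf{x}_\star\rangle\ge\mu\|\mathbf{x}-\mathbf{x}_\star\|^2$ for all $\mathbf{x}$. (SCO): there is $\ell>0$ with $\langle\mathbb{F}(\mathbf{x}),\mathbf{x}-\mathbf{x}_\star\rangle\ge\frac1\ell\|\mathbb{F}(\mathbf{x})\|^2$ for all $\mathbf{x}$. Deterministic PEARL-SGD: given $\mathbf{x}_0\in\mathbb{R}^D$, synchronization interval $\tau\ge1$, number of rounds $R\ge1$, step-sizes $\gamma_k>0$: for each round $p=0,\dots,R-1$, each player $i$ and each $k=\tau p,\dots,\tau(p+1)-1$, set $x^i_{k+1}=x^i_k-\gamma_k\nabla f_i(x^i_k;x^{-i}_{\tau p})$ (the other players' blocks are frozen at their values at the last synchronization time $\tau p$). Write $\mathbf{x}_k=(x^1_k,\dots,x^n_k)$; the output is $\mathbf{x}_{\tau R}$. *)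

From HB Require Import structures.
From mathcomp Require Import all_boot all_order all_algebra.
From mathcomp Require Import all_classical all_reals all_analysis.
Set Implicit Arguments. Unset Strict Implicit. Unset Printing Implicit Defensive.
Import Order.TTheory GRing.Theory Num.Theory.
Import numFieldNormedType.Exports.
Local Open Scope ring_scope.

Definition joint (R : realType) (n : nat) (d : 'I_n -> nat) :=
  forall i : 'I_n, 'rV[R]_(d i).

Section Defs.
Variables (R : realType) (n : nat) (d : 'I_n -> nat).
Local Notation J := (joint R d).

Definition vdot k (u v : 'rV[R]_k) : R := \sum_(j < k) u 0 j * v 0 j.
Definition vnorm k (u : 'rV[R]_k) : R := Num.sqrt (vdot u u).
Definition jdot (x y : J) : R := \sum_(i < n) vdot (x i) (y i).
Definition jnorm2 (x : J) : R := jdot x x.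
Definition jsub (x y : J) : J := fun i => x i - y i.

(* replace the i-th block of x by y : f_i(y ; x^{-i}) = f i (upd x y) *)
Definition upd (x : J) (i : 'I_n) (y : 'rV[R]_(d i)) : J := @dfwith _ (fun j : 'I_n => 'rV[R]_(d j)) x i y.

Definition is_partial_grad (f : 'I_n -> J -> R)
  (G : forall i : 'I_n, J -> 'rV[R]_(d i)) : Prop :=
  forall (i : 'I_n) (x : J),
    differentiable (fun y : 'rV[R]_(d i) => f i (upd x y)) (x i) /\
    forall v : 'rV[R]_(d i),
      'd (fun y : 'rV[R]_(d i) => f i (upd x y)) (x i) v = vdot (G i x) v.

Definition CVX (f : 'I_n -> J -> R) : Prop :=
  forall (i : 'I_n) (x : J) (y z : 'rV[R]_(d i)) (t : R), 0 <= t -> t <= 1 ->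
    f i (upd x (t *: y + (1 - t) *: z)) <= t * f i (upd x y) + (1 - t) * f i (upd x z).

Definition SM (G : forall i : 'I_n, J -> 'rV[R]_(d i)) (L : 'I_n -> R) : Prop :=
  forall i : 'I_n, 0 < L i /\
    forall (x : J) (y z : 'rV[R]_(d i)),
      vnorm (G i (upd x y) - G i (upd x z)) <= L i * vnorm (y - z).

Definition Fop (G : forall i : 'I_n, J -> 'rV[R]_(d i)) (x : J) : J := fun i => G i x.

Definition QSM (G : forall i : 'I_n, J -> 'rV[R]_(d i)) (xs : J) (mu : R) : Prop :=
  (forall i, Fop G xs i = 0) /\ (forall y : J, (forall i, Fop G y i = 0) -> y = xs) /\
  0 < mu /\ forall x : J, jdot (Fop G x) (jsub x xs) >= mu * jnorm2 (jsub x xs).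

Definition SCO (G : forall i : 'I_n, J -> 'rV[R]_(d i)) (xs : J) (ell : R) : Prop :=
  0 < ell /\ forall x : J, jdot (Fop G x) (jsub x xs) >= ell^-1 * jnorm2 (Fop G x).

(* Deterministic PEARL-SGD with step sizes gam k.
   local_iter xs p i t = x^i_{tau p + t}, given xs = x_{tau p}. *)
Fixpoint local_iter (G : forall i : 'I_n, J -> 'rV[R]_(d i)) (gam : nat -> R)
  (tau p : nat) (xs : J) (i : 'I_n) (t : nat) : 'rV[R]_(d i) :=
  match t with
  | 0 => xs i
  | t'.+1 => local_iter G gam tau p xs i t'
             - gam (tau * p + t')%N *: G i (upd xs (local_iter G gam tau p xs i t'))
  end.

(* sync_iter p = x_{tau p} *)
Fixpoint sync_iter (G : forall i : 'I_n, J -> 'rV[R]_(d i)) (gam : nat -> R)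
  (tau : nat) (x0 : J) (p : nat) : J :=
  match p with
  | 0 => x0
  | p'.+1 => fun i => local_iter G gam tau p' (sync_iter G gam tau x0 p') i tau
  end.

Definition pearl_iter (G : forall i : 'I_n, J -> 'rV[R]_(d i)) (gam : nat -> R)
  (tau : nat) (x0 : J) (k : nat) : J :=
  fun i => local_iter G gam tau (k %/ tau) (sync_iter G gam tau x0 (k %/ tau)) i (k %% tau).

End Defs.

From HB Require Import structures.
From mathcomp Require Import all_boot all_order all_algebra.
From mathcomp Require Import all_classical all_reals all_analysis.
From mathcomp Require Import lra ring zify.
Import Order.TTheory GRing.Theory Num.Theory.
Import numFieldNormedType.Exports.
Local Open Scope ring_scope.

(* In a round each player runs tau gradient steps on its own objective with the
   other blocks frozen at the synchronization point x.  The frozen partial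
   gradient is monotone (by convexity) and L_i-Lipschitz, so along these steps it
   grows by at most a factor 16/15 as long as gamma L_max (tau - 1) <= 1/2, and the
   round lands within (8/15) gamma L_max (tau - 1) * gamma tau ||F x|| of the single
   joint step x - gamma tau F x.  That joint step is contracted by (QSM) and (SCO),
   and the perturbation is absorbed with ||x - x*|| ||F x|| <= sqrt kappa <F x, x - x*>,
   which follows from the same two conditions. *)

Section RealSums.
Context {R : realType}.

Lemma CauchySchwarz_sum {I : finType} (a b : I -> R) :
  (\sum_i a i * b i) ^+ 2 <= (\sum_i a i ^+ 2) * (\sum_i b i ^+ 2).
Proof.
set A := \sum_i a i ^+ 2; set B := \sum_i b i ^+ 2; set C := \sum_i a i * b i.
have quad t : 0 <= A + 2 * t * C + t ^+ 2 * B.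
  have -> : A + 2 * t * C + t ^+ 2 * B = \sum_i (a i + t * b i) ^+ 2.
    by rewrite /A /B /C !mulr_sumr -!big_split /=; apply: eq_bigr => i _; ring.
  by apply: sumr_ge0 => i _; exact: sqr_ge0.
have [B0|] := ltrP 0 B.
  have := quad (- C / B).
  have -> : A + 2 * (- C / B) * C + (- C / B) ^+ 2 * B = A - C ^+ 2 / B.
    by field; rewrite gt_eqF.
  by rewrite subr_ge0 ler_pdivrMr.
rewrite le_eqVlt ltNge sumr_ge0 ?orbF => [/eqP B0|i _]; last exact: sqr_ge0.
have b0 i : b i = 0.
  move/eqP: B0; rewrite /B psumr_eq0 => [/allP/(_ i (mem_index_enum i))|j _].
    by rewrite /= sqrf_eq0 => /eqP.
  exact: sqr_ge0.
by rewrite /C big1 ?expr0n ?B0 ?mulr0 // => i _; rewrite b0 mulr0.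
Qed.

Lemma CauchySchwarz_sum_sqrt {I : finType} (a b : I -> R) :
  \sum_i a i * b i <= Num.sqrt (\sum_i a i ^+ 2) * Num.sqrt (\sum_i b i ^+ 2).
Proof.
rewrite -sqrtrM ?sumr_ge0 // => [|i _]; last exact: sqr_ge0.
apply: le_trans (ler_norm _) _.
by rewrite -sqrtr_sqr ler_wsqrtr // CauchySchwarz_sum.
Qed.

Lemma Minkowski_sum_sqr {I : finType} (a b : I -> R) :
  \sum_i (a i + b i) ^+ 2
    <= (Num.sqrt (\sum_i a i ^+ 2) + Num.sqrt (\sum_i b i ^+ 2)) ^+ 2.
Proof.
have sq0 (c : I -> R) : 0 <= \sum_i c i ^+ 2 by apply: sumr_ge0 => i _; exact: sqr_ge0.
have E : \sum_i (a i + b i) ^+ 2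
    = \sum_i a i ^+ 2 + 2 * \sum_i a i * b i + \sum_i b i ^+ 2.
  by rewrite mulr_sumr -!big_split /=; apply: eq_bigr => i _; ring.
rewrite E sqrrD !sqr_sqrtr // lerD2r lerD2l -[X in _ <= X]mulr_natl.
by rewrite ler_wpM2l // CauchySchwarz_sum_sqrt.
Qed.

Lemma sumr_ord_natr m : \sum_(t < m) (t%:R : R) = m%:R * (m%:R - 1) / 2.
Proof.
elim: m => [|m IH]; first by rewrite big_ord0 mul0r mul0r.
by rewrite big_ord_recr /= IH -natr1; field.
Qed.

End RealSums.

Section Vectors.
Context {R : realType} {k : nat}.
Implicit Types (u v w : 'rV[R]_k).

Lemma vdotC u v : vdot u v = vdot v u.
Proof. by apply: eq_bigr => j _; rewrite mulrC. Qed.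

Lemma vdotDl u v w : vdot (u + v) w = vdot u w + vdot v w.
Proof. by rewrite /vdot -big_split; apply: eq_bigr => j _; rewrite !mxE mulrDl. Qed.

Lemma vdotZl c u w : vdot (c *: u) w = c * vdot u w.
Proof. by rewrite /vdot mulr_sumr; apply: eq_bigr => j _; rewrite !mxE mulrA. Qed.

Lemma vdotNl u w : vdot (- u) w = - vdot u w.
Proof. by rewrite -scaleN1r vdotZl mulN1r. Qed.

Lemma vdotBl u v w : vdot (u - v) w = vdot u w - vdot v w.
Proof. by rewrite vdotDl vdotNl. Qed.

Lemma vdotDr u v w : vdot w (u + v) = vdot w u + vdot w v.
Proof. by rewrite vdotC vdotDl !(vdotC w). Qed.

Lemma vdotZr c u w : vdot w (c *: u) = c * vdot w u.
Proof. by rewrite vdotC vdotZl vdotC. Qed.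

Lemma vdotNr u w : vdot w (- u) = - vdot w u.
Proof. by rewrite vdotC vdotNl vdotC. Qed.

Lemma vdotBr u v w : vdot w (u - v) = vdot w u - vdot w v.
Proof. by rewrite vdotDr vdotNr. Qed.

Lemma vdot_ge0 u : 0 <= vdot u u.
Proof. by apply: sumr_ge0 => j _; rewrite -expr2 sqr_ge0. Qed.

Lemma vnorm_ge0 u : 0 <= vnorm u.
Proof. exact: sqrtr_ge0. Qed.

Lemma sqr_vnorm u : vnorm u ^+ 2 = vdot u u.
Proof. by rewrite sqr_sqrtr // vdot_ge0. Qed.

Lemma vnorm0 : vnorm (0 : 'rV[R]_k) = 0.
Proof. by rewrite /vnorm /vdot big1 ?sqrtr0 // => j _; rewrite mxE mul0r. Qed.

Lemma vdot_le u v : vdot u v <= vnorm u * vnorm v.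
Proof.
have E w : \sum_(j < k) w 0 j ^+ 2 = vdot w w by apply: eq_bigr => j _; rewrite expr2.
by have := CauchySchwarz_sum_sqrt (fun j => u 0 j) (fun j => v 0 j); rewrite !E.
Qed.

Lemma vnormZ c u : vnorm (c *: u) = `|c| * vnorm u.
Proof. by rewrite /vnorm vdotZl vdotZr mulrA -expr2 sqrtrM ?sqr_ge0 // sqrtr_sqr. Qed.

Lemma vnormN u : vnorm (- u) = vnorm u.
Proof. by rewrite -scaleN1r vnormZ normrN normr1 mul1r. Qed.

Lemma vnormD u v : vnorm (u + v) <= vnorm u + vnorm v.
Proof.
rewrite -(ler_pXn2r (_ : 0 < 2)%N) ?nnegrE ?addr_ge0 ?vnorm_ge0 //.
rewrite sqr_vnorm vdotDl !vdotDr (vdotC v u) sqrrD !sqr_vnorm.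
by have := vdot_le u v; lra.
Qed.

Lemma vnormB u v : vnorm (u - v) <= vnorm u + vnorm v.
Proof. by rewrite -(vnormN v) vnormD. Qed.

Lemma vnorm_sum (I : Type) (r : seq I) (F : I -> 'rV[R]_k) :
  vnorm (\sum_(j <- r) F j) <= \sum_(j <- r) vnorm (F j).
Proof.
elim: r => [|a r IH]; first by rewrite !big_nil vnorm0.
by rewrite !big_cons; apply: le_trans (vnormD _ _) _; exact: lerD.
Qed.

End Vectors.

Lemma convex_grad_le (R : realType) k (phi : 'rV[R]_k -> R) (g y z : 'rV[R]_k) :
  (forall t, 0 <= t -> t <= 1 -> phi (t *: z + (1 - t) *: y) <= t * phi z + (1 - t) * phi y) ->
  differentiable phi y -> (forall v, 'd phi y v = vdot g v) ->
  phi y + vdot g (z - y) <= phi z.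
Proof.
move=> phi_convex phi_diff dphi.
have phi_der : derivable phi y (z - y) by exact: diff_derivable.
have cv := cvg_dnbhs_at_right phi_der.
rewrite -dphi -deriveE // addrC -lerBrDr.
apply: (cvgr_to_le cv); near=> h.
have h0 : 0 < h by near: h; exact: nbhs_right_gt.
have h1 : h <= 1 by near: h; exact: nbhs_right_le.
rewrite /=; have -> : h *: (z - y) + y = h *: z + (1 - h) *: y.
  by rewrite scalerBr scalerBl scale1r addrA addrAC.
rewrite ler_pdivrMl // mulrBr.
by have := phi_convex h (ltW h0) h1; lra.
Unshelve. all: by end_near.
Qed.

Section PartialGradients.
Context {R : realType} {n : nat} {d : 'I_n -> nat}.
Local Notation J := (joint R d).

Lemma upd_at (x : J) i (y : 'rV[R]_(d i)) : upd x y i = y.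
Proof. exact: dfwithin. Qed.

Lemma upd_upd (x : J) i (y z : 'rV[R]_(d i)) : upd (upd x y) z = upd x z.
Proof.
apply: functional_extensionality_dep => j; rewrite /upd.
by case: (eqVneq i j) => [<-|ij]; rewrite ?dfwithin // !dfwithout.
Qed.

Lemma upd_id (x : J) i : upd x (x i) = x.
Proof.
apply: functional_extensionality_dep => j; rewrite /upd.
by case: (eqVneq i j) => [<-|ij]; rewrite ?dfwithin // dfwithout.
Qed.

Lemma partial_grad_monotone {f : 'I_n -> J -> R} {G : forall i : 'I_n, J -> 'rV[R]_(d i)}
    (x : J) {i} (a b : 'rV[R]_(d i)) :
  is_partial_grad f G -> CVX f ->
  0 <= vdot (G i (upd x a) - G i (upd x b)) (a - b).
Proof.
move=> Hgrad Hcvx.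
have first_order a' b' : f i (upd x a') + vdot (G i (upd x a')) (b' - a') <= f i (upd x b').
  have E : (fun y : 'rV_(d i) => f i (upd (upd x a') y)) = (fun y => f i (upd x y)).
    by apply: functional_extensionality_dep => y; rewrite upd_upd.
  have [] := Hgrad i (upd x a'); rewrite upd_at E => Hdiff Hd.
  by apply: convex_grad_le Hdiff Hd => t t0 t1; exact: Hcvx.
have := first_order a b; have := first_order b a.
by rewrite -(opprB a b) vdotNr vdotBl; lra.
Qed.

End PartialGradients.

Section SmallPowers.
Context {R : realType}.

Lemma expr1D_le_small (a : R) s :
  0 <= a -> a * s%:R <= 1 / 16 -> (1 + a) ^+ s <= 1 + 16 / 15 * (a * s%:R).
Proof.
move=> a0; elim: s => [|s IH] Has; first by rewrite expr0 mulr0 mulr0 addr0.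
have as_le : a * s%:R <= 1 / 16.
  by apply: le_trans Has; rewrite ler_wpM2l // ler_nat.
rewrite exprS mulrC; apply: le_trans (ler_wpM2r _ (IH as_le)) _; first lra.
move: Has; rewrite -natr1 => Has.
have : 0 <= a * s%:R by rewrite mulr_ge0.
nra.
Qed.

Lemma sqr_mul_pred_le (b : R) T :
  0 <= b -> b * T%:R <= 1 / 2 -> b ^+ 2 * T.-1%:R <= 1 / 16.
Proof.
case: T => [|T] b0; first by rewrite /= !mulr0.
rewrite -natr1 /= => bT.
have T0 : 0 <= T%:R :> R by exact: ler0n.
have sq : 4 * T%:R <= (T%:R + 1) ^+ 2 :> R by have := sqr_ge0 (T%:R - 1 : R); lra.
have : (b * (T%:R + 1)) ^+ 2 <= 1 / 4.
  by rewrite expr2; apply: le_trans (ler_pM _ _ bT bT) _; rewrite ?mulr_ge0 //; lra.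
have : 0 <= b ^+ 2 by exact: sqr_ge0.
rewrite exprMn; nra.
Qed.

End SmallPowers.

Section GradientDescent.
Context {R : realType} {k : nat}.
Variables (g : 'rV[R]_k -> 'rV[R]_k) (y : nat -> 'rV[R]_k) (L gam : R).
Hypothesis L_ge0 : 0 <= L.
Hypothesis gam_gt0 : 0 < gam.
Hypothesis g_lipschitz : forall a b, vnorm (g a - g b) <= L * vnorm (a - b).
Hypothesis g_monotone : forall a b, 0 <= vdot (g a - g b) (a - b).
Hypothesis y_step : forall s, y s.+1 = y s - gam *: g (y s).

Local Notation N s := (vdot (g (y s)) (g (y s))).

(* Monotonicity makes the cross term nonpositive, so only the Lipschitz term survives. *)
Lemma gd_grad_sqr_step s : N s.+1 <= (1 + (gam * L) ^+ 2) * N s.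
Proof.
set del := g (y s.+1) - g (y s).
have dy : y s.+1 - y s = - (gam *: g (y s)) by rewrite y_step addrAC subrr add0r.
have cross : vdot del (g (y s)) <= 0.
  have := g_monotone (y s.+1) (y s).
  by rewrite -/del dy vdotNr vdotZr oppr_ge0 pmulr_rle0.
have lip : vdot del del <= (gam * L) ^+ 2 * N s.
  have := g_lipschitz (y s.+1) (y s).
  rewrite -/del dy vnormN vnormZ gtr0_norm // => H.
  rewrite -!sqr_vnorm -exprMn ler_pXn2r ?nnegrE ?vnorm_ge0 //; last first.
    by rewrite !mulr_ge0 ?vnorm_ge0 // ltW.
  by apply: le_trans H _; rewrite [gam * L]mulrC -mulrA lexx.
have -> : g (y s.+1) = g (y s) + del by rewrite /del addrC subrK.
clearbody del; rewrite vdotDl !vdotDr (vdotC (g (y s)) del).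
by have := vdot_ge0 (g (y s)); lra.
Qed.

Lemma gd_grad_sqr_le s : N s <= (1 + (gam * L) ^+ 2) ^+ s * N 0.
Proof.
elim: s => [|s IH]; first by rewrite expr0 mul1r.
apply: le_trans (gd_grad_sqr_step s) _.
by rewrite [_ ^+ s.+1]exprS -mulrA; apply: ler_wpM2l; rewrite ?addr_ge0 ?sqr_ge0.
Qed.

Lemma gd_grad_norm_le s :
  (gam * L) ^+ 2 * s%:R <= 1 / 16 -> vnorm (g (y s)) <= 16 / 15 * vnorm (g (y 0)).
Proof.
move=> Hs.
rewrite -(ler_pXn2r (_ : 0 < 2)%N) ?nnegrE ?mulr_ge0 ?vnorm_ge0 //.
rewrite exprMn !sqr_vnorm; apply: le_trans (gd_grad_sqr_le s) _.
apply: ler_wpM2r; first exact: vdot_ge0.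
apply: le_trans (expr1D_le_small _ _ (sqr_ge0 _) Hs) _; lra.
Qed.

Lemma gd_displacement_le t : (gam * L) ^+ 2 * t.-1%:R <= 1 / 16 ->
  vnorm (y t - y 0) <= 16 / 15 * gam * t%:R * vnorm (g (y 0)).
Proof.
elim: t => [|t IH] Ht; first by rewrite subrr vnorm0 mulr0 mul0r.
have Ht' : (gam * L) ^+ 2 * t.-1%:R <= 1 / 16.
  by apply: le_trans Ht; rewrite ler_wpM2l ?sqr_ge0 // ler_nat leq_pred.
rewrite y_step addrAC; apply: le_trans (vnormB _ _) _.
rewrite vnormZ gtr0_norm // -natr1.
have := gd_grad_norm_le _ Ht; have := IH Ht'; have := ltW gam_gt0; nra.
Qed.

Lemma gd_drift_sum_le T : gam * L * T.-1%:R <= 1 / 2 ->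
  vnorm (\sum_(t < T) (g (y t) - g (y 0)))
    <= 8 / 15 * gam * L * (T%:R * (T%:R - 1)) * vnorm (g (y 0)).
Proof.
move=> HT; apply: le_trans (vnorm_sum _ _ _) _.
have -> : 8 / 15 * gam * L * (T%:R * (T%:R - 1)) * vnorm (g (y 0))
    = \sum_(t < T) 16 / 15 * gam * L * t%:R * vnorm (g (y 0)).
  by rewrite -!(mulr_suml, mulr_sumr) sumr_ord_natr; field.
apply: ler_sum => t _; apply: le_trans (g_lipschitz _ _) _.
have Ht : (gam * L) ^+ 2 * t.-1%:R <= 1 / 16.
  apply: le_trans (sqr_mul_pred_le _ _ (mulr_ge0 (ltW gam_gt0) L_ge0) HT).
  by rewrite ler_wpM2l ?sqr_ge0 // ler_nat; have := ltn_ord t; lia.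
by have := gd_displacement_le _ Ht; rewrite -subr_ge0 => /(mulr_ge0 L_ge0); lra.
Qed.

End GradientDescent.

Section JointVectors.
Context {R : realType} {n : nat} {d : 'I_n -> nat}.
Implicit Types (u v : joint R d).

Lemma jnorm2_ge0 u : 0 <= jnorm2 u.
Proof. by apply: sumr_ge0 => i _; exact: vdot_ge0. Qed.

Lemma jnorm2E u : jnorm2 u = \sum_i vnorm (u i) ^+ 2.
Proof. by apply: eq_bigr => i _; rewrite sqr_vnorm. Qed.

Lemma jdot_le u v : jdot u v <= Num.sqrt (jnorm2 u) * Num.sqrt (jnorm2 v).
Proof.
apply: le_trans (_ : \sum_i vnorm (u i) * vnorm (v i) <= _).
  by apply: ler_sum => i _; exact: vdot_le.
by rewrite !jnorm2E CauchySchwarz_sum_sqrt.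
Qed.

Lemma jnorm2_subZ u v (h : R) :
  jnorm2 (fun i => u i - h *: v i) = jnorm2 u - 2 * h * jdot v u + h ^+ 2 * jnorm2 v.
Proof.
rewrite /jnorm2 /jdot !mulr_sumr -sumrB -big_split /=; apply: eq_bigr => i _.
by rewrite vdotBl !vdotBr !vdotZl !vdotZr (vdotC (u i)); ring.
Qed.

End JointVectors.

(* [W] is the squared distance to the solution after an exact joint step of
   length [h]; [e * h * sqrt P2] bounds how far a round strays from that step. *)
Lemma inexact_step_contraction (R : realType) (mu ell h e zeta D2 c P2 W : R) :
  0 < mu -> 0 < ell -> 0 < h -> 0 <= e -> 0 <= D2 -> 0 <= P2 -> 0 <= W ->
  mu * D2 <= c -> P2 <= ell * c -> W = D2 - 2 * h * c + h ^+ 2 * P2 ->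
  0 <= zeta -> zeta <= 2 - h * ell - 2 * e * Num.sqrt (ell / mu) - e ^+ 2 * h * ell ->
  (Num.sqrt W + e * h * Num.sqrt P2) ^+ 2 <= (1 - h * mu * zeta) * D2.
Proof.
move=> mu0 ell0 h0 e0 D0 P0 W0 qsm sco WE z0 zle.
set sk := Num.sqrt (ell / mu) in zle *.
have sk0 : 0 <= sk by exact: sqrtr_ge0.
have c0 : 0 <= c by apply: le_trans qsm; rewrite mulr_ge0 // ltW.
have hP2 : h ^+ 2 * P2 <= h ^+ 2 * (ell * c) by rewrite ler_wpM2l ?sqr_ge0.
have esk0 : 0 <= 2 * e * sk + e ^+ 2 * h * ell.
  by rewrite addr_ge0 ?mulr_ge0 ?sqr_ge0 // ltW.
have WD : W <= D2.
  have : 0 <= h * c * (2 - h * ell) by apply: mulr_ge0; [exact: mulr_ge0 (ltW h0) c0 | lra].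
  by rewrite WE; lra.
have cross : Num.sqrt W * Num.sqrt P2 <= sk * c.
  have key : W * P2 * mu <= ell * c ^+ 2.
    have := ler_wpM2r (mulr_ge0 (ltW mu0) P0) WD.
    have := ler_wpM2r P0 qsm; have := ler_wpM2l c0 sco.
    by rewrite expr2; lra.
  rewrite -(ler_pXn2r (_ : 0 < 2)%N) ?nnegrE ?mulr_ge0 ?sqrtr_ge0 //.
  by rewrite !exprMn !sqr_sqrtr ?divr_ge0 ?(ltW ell0) ?(ltW mu0) // mulrAC ler_pdivlMr.
have heP : 0 <= e * h by rewrite mulr_ge0 // ltW.
have LHS : (Num.sqrt W + e * h * Num.sqrt P2) ^+ 2
    <= W + 2 * (e * h) * (sk * c) + (e * h) ^+ 2 * (ell * c).
  rewrite sqrrD sqr_sqrtr // exprMn sqr_sqrtr // -mulr_natl.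
  have := ler_wpM2l heP cross; have := ler_wpM2l (sqr_ge0 (e * h)) sco; nra.
apply: le_trans LHS _.
have rate : h * c * zeta <= h * c * (2 - h * ell - 2 * e * sk - e ^+ 2 * h * ell).
  by rewrite ler_wpM2l // mulr_ge0 // ltW.
have := ler_wpM2l (mulr_ge0 (ltW h0) z0) qsm.
rewrite WE; nra.
Qed.

Section Round.
Context {R : realType} {n : nat} {d : 'I_n -> nat}.
Local Notation J := (joint R d).
Variables (f : 'I_n -> J -> R) (G : forall i : 'I_n, J -> 'rV[R]_(d i)) (L : 'I_n -> R)
  (xs : J) (tau : nat) (gam Lm : R).
Hypothesis Hgrad : is_partial_grad f G.
Hypothesis Hcvx : CVX f.
Hypothesis Hsm : SM G L.
Hypothesis tau_ge1 : (1 <= tau)%N.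
Hypothesis gam_gt0 : 0 < gam.
Hypothesis Lm_ge0 : 0 <= Lm.
Hypothesis L_le_Lm : forall i, L i <= Lm.
Hypothesis drift_small : gam * Lm * (tau%:R - 1) <= 1 / 2.

(* Length of a round and relative drift of the local gradients during it. *)
Let h := gam * tau%:R.
Let e := 8 / 15 * (gam * Lm * (tau%:R - 1)).

Variables (x : J) (p : nat).
Local Notation y i t := (local_iter G (fun _ => gam) tau p x i t).

Lemma local_iter_sum i t : y i t = x i - gam *: \sum_(s < t) G i (upd x (y i s)).
Proof.
elim: t => [|t IH]; first by rewrite big_ord0 scaler0 subr0.
by rewrite /= big_ord_recr /= scalerDr opprD addrA -IH.
Qed.

Lemma local_iter_drift i : y i tau - xs i
  = (x i - xs i - h *: G i x) - gam *: \sum_(t < tau) (G i (upd x (y i t)) - G i x).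
Proof.
rewrite local_iter_sum sumrB sumr_const card_ord -scaler_nat scalerBr scalerA.
by rewrite /h opprB addrA subrK addrAC.
Qed.

Lemma local_iter_dist_le i :
  vnorm (y i tau - xs i) <= vnorm (x i - xs i - h *: G i x) + e * h * vnorm (G i x).
Proof.
have [Li_gt0 Hlip] := Hsm i.
have tau1 : tau.-1%:R = tau%:R - 1 :> R by rewrite -subn1 natrB.
have drift := @gd_drift_sum_le R (d i) (fun a => G i (upd x a)) (fun t => y i t) (L i) gam
  (ltW Li_gt0) gam_gt0 (Hlip x) (fun a b => partial_grad_monotone x a b Hgrad Hcvx)
  (fun s => erefl) tau.
rewrite /= upd_id tau1 in drift.
have Li_drift : gam * L i * (tau%:R - 1) <= 1 / 2.
  by apply: le_trans drift_small; rewrite ler_wpM2r ?subr_ge0 ?ler1n // ler_wpM2l // ltW.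
rewrite local_iter_drift; apply: le_trans (vnormB _ _) _.
rewrite lerD2l vnormZ gtr0_norm //; apply: le_trans (ler_wpM2l (ltW gam_gt0) (drift Li_drift)) _.
have tt0 : 0 <= tau%:R * (tau%:R - 1) :> R by rewrite mulr_ge0 // subr_ge0 ler1n.
have dL : 0 <= Lm - L i by rewrite subr_ge0.
have := mulr_ge0 (mulr_ge0 (mulr_ge0 tt0 (vnorm_ge0 (G i x))) (sqr_ge0 gam)) dL.
by rewrite /e /h; lra.
Qed.

Lemma round_dist_sqr_le :
  jnorm2 (jsub (fun i => y i tau) xs)
    <= (Num.sqrt (jnorm2 (fun i => x i - xs i - h *: G i x))
        + e * h * Num.sqrt (jnorm2 (Fop G x))) ^+ 2.
Proof.
have eh0 : 0 <= e * h.
  by rewrite !mulr_ge0 ?ler0n ?subr_ge0 ?ler1n // ltW.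
have W2 : \sum_i vnorm (x i - xs i - h *: G i x) ^+ 2
    = jnorm2 (fun i => x i - xs i - h *: G i x) by rewrite jnorm2E.
have F2 : \sum_i (e * h * vnorm (G i x)) ^+ 2 = (e * h) ^+ 2 * jnorm2 (Fop G x).
  by rewrite jnorm2E mulr_sumr; apply: eq_bigr => i _; rewrite exprMn.
apply: (@le_trans _ _ (\sum_i (vnorm (x i - xs i - h *: G i x) + e * h * vnorm (G i x)) ^+ 2)).
  rewrite jnorm2E; apply: ler_sum => i _.
  rewrite ler_pXn2r ?nnegrE ?addr_ge0 ?(mulr_ge0 eh0) ?vnorm_ge0 //.
  exact: local_iter_dist_le.
apply: le_trans (Minkowski_sum_sqr (fun i => vnorm (x i - xs i - h *: G i x))
  (fun i => e * h * vnorm (G i x))) _.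
by rewrite W2 F2 sqrtrM ?sqr_ge0 // sqrtr_sqr ger0_norm.
Qed.

Lemma round_contraction (mu ell zeta : R) :
  QSM G xs mu -> SCO G xs ell -> 0 <= zeta ->
  zeta <= 2 - h * ell - 2 * e * Num.sqrt (ell / mu) - e ^+ 2 * h * ell ->
  jnorm2 (jsub (fun i => y i tau) xs) <= (1 - h * mu * zeta) * jnorm2 (jsub x xs).
Proof.
move=> [_ [_ [mu0 qsm]]] [ell0 sco] zeta0 zeta_le.
apply: le_trans round_dist_sqr_le _.
apply: inexact_step_contraction zeta0 zeta_le; rewrite ?jnorm2_ge0 //.
- by rewrite mulr_gt0 // ltr0n.
- by rewrite !mulr_ge0 ?subr_ge0 ?ler1n // ltW.
- by rewrite -ler_pdivrMl // mulrC.
- exact: (jnorm2_subZ (jsub x xs) (Fop G x)).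
Qed.

End Round.

Arguments round_contraction {R n d f G L xs tau gam Lm}.


Lemma qsm_sco_mu_le_ell {R : realType} {n} {d : 'I_n -> nat}
    {G : forall i : 'I_n, joint R d -> 'rV[R]_(d i)} {xs : joint R d} {mu ell : R} :
  (0 < n)%N -> (forall i, (0 < d i)%N) -> QSM G xs mu -> SCO G xs ell -> mu <= ell.
Proof.
move=> n0 d0 [_ [_ [mu0 qsm]]] [ell0 sco].
(* Any point other than [xs] would do; [d i > 0] makes [xs + 1] one. *)
pose x : joint R d := fun i => xs i + const_mx 1.
set D := jnorm2 (jsub x xs); set c := jdot (Fop G x) (jsub x xs).
set P := jnorm2 (Fop G x).
have D0 : 0 < D.
  have -> : D = \sum_i ((d i)%:R : R).
    apply: eq_bigr => i _; rewrite /jsub addrAC subrr add0r /vdot.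
    by under eq_bigr do rewrite mxE mulr1; rewrite sumr_const card_ord.
  rewrite (bigD1 (Ordinal n0)) //= ltr_pwDl ?ltr0n //.
  by apply: sumr_ge0 => i _; exact: ler0n.
have c0 : 0 < c by apply: lt_le_trans (qsm x); rewrite mulr_gt0.
have Pc : P <= ell * c by rewrite -ler_pdivrMl //; exact: sco.
have cDP : c ^+ 2 <= D * P.
  rewrite -[D * P]sqr_sqrtr ?mulr_ge0 ?jnorm2_ge0 ?(ltW D0) // sqrtrM ?(ltW D0) //.
  rewrite ler_pXn2r ?nnegrE ?mulr_ge0 ?sqrtr_ge0 ?(ltW c0) // mulrC.
  exact: jdot_le.
have cD : c <= ell * D.
  rewrite -(ler_pM2r c0) -expr2; apply: le_trans cDP _.
  rewrite [ell * D]mulrC -mulrA; by rewrite ler_pM2l.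
by rewrite -(ler_pM2r D0); apply: le_trans (qsm x) cD.
Qed.

Lemma sqrt_third_ge (R : realType) (k : R) : 0 <= k -> 23 / 40 * Num.sqrt k <= Num.sqrt (k / 3).
Proof.
move=> k0; rewrite -(ler_pXn2r (_ : 0 < 2)%N) ?nnegrE ?mulr_ge0 ?sqrtr_ge0 //.
by rewrite exprMn !sqr_sqrtr //; lra.
Qed.

Lemma step_size_bounds (R : realType) (p m sk s3 : R) :
  0 <= p -> 0 <= m -> 1 <= sk -> 23 / 40 * sk <= s3 -> s3 <= sk -> p + 2 * m * sk <= 1 ->
  [/\ m <= 1 / 2, 0 <= 2 - p - 2 * m * s3,
      2 * (8 / 15 * m) * sk + (8 / 15 * m) ^+ 2 * p <= 2 * m * s3
    & p * (2 - p - 2 * m * s3) <= 1].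
Proof.
move=> p0 m0 sk1 s3_ge s3_le step.
have msk : m <= m * sk by rewrite ler_peMr.
have ms3 : m * s3 <= m * sk by rewrite ler_wpM2l.
have mp : m * p <= 1 / 8.
  have := sqr_ge0 (p - 2 * m); rewrite expr2; nra.
split; [lra | lra | | ].
- have := ler_wpM2l m0 s3_ge; nra.
- have := sqr_ge0 (p - 1); rewrite expr2; nra.
Qed.

Lemma pearl_step_size {R : realType} {gam ell mu Lm : R} {tau : nat} :
  0 < gam -> 0 < mu -> mu <= ell -> 0 <= Lm -> (1 <= tau)%N ->
  gam <= (ell * tau%:R + 2 * (tau%:R - 1) * Lm * Num.sqrt (ell / mu))^-1 ->
  let m := gam * Lm * (tau%:R - 1) in
  let zeta := 2 - gam * ell * tau%:R
              - 2 * (tau%:R - 1) * gam * Lm * Num.sqrt (ell / mu / 3) in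
  [/\ m <= 1 / 2, 0 <= zeta,
      zeta <= 2 - gam * tau%:R * ell - 2 * (8 / 15 * m) * Num.sqrt (ell / mu)
              - (8 / 15 * m) ^+ 2 * (gam * tau%:R) * ell
    & 0 <= 1 - gam * tau%:R * mu * zeta].
Proof.
move=> gam0 mu0 mu_ell Lm0 tau1 step m zeta.
have ell0 : 0 < ell by apply: lt_le_trans mu_ell.
have tau0 : 0 <= tau%:R - 1 :> R by rewrite subr_ge0 ler1n.
set sk := Num.sqrt (ell / mu) in step *; set s3 := Num.sqrt (ell / mu / 3) in zeta *.
have sk1 : 1 <= sk by rewrite -sqrtr1 ler_wsqrtr // ler_pdivlMr // mul1r.
have [] := @step_size_bounds R (gam * ell * tau%:R) m sk s3.
- by rewrite !mulr_ge0 // ltW.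
- by rewrite !mulr_ge0 // ltW.
- exact: sk1.
- by apply: sqrt_third_ge; rewrite divr_ge0 // ltW.
- by apply: ler_wsqrtr; rewrite ler_pdivrMr // ler_peMr ?divr_ge0 ?ler1n ?ltW.
- have X0 : 0 < ell * tau%:R + 2 * (tau%:R - 1) * Lm * sk.
    have : 0 < ell * tau%:R by rewrite mulr_gt0 // ltr0n.
    have : 0 <= 2 * (tau%:R - 1) * Lm * sk by rewrite !mulr_ge0 // (le_trans ler01 sk1).
    lra.
  have := ler_wpM2r (ltW X0) step; rewrite mulVf ?gt_eqF // /m.
  by have -> : gam * (ell * tau%:R + 2 * (tau%:R - 1) * Lm * sk)
    = gam * ell * tau%:R + 2 * (gam * Lm * (tau%:R - 1)) * sk by ring.
have zetaE : zeta = 2 - gam * ell * tau%:R - 2 * m * s3 by rewrite /zeta /m; ring.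
rewrite zetaE => m_half zeta0 drift rate; split => //; first lra.
have : gam * tau%:R * mu * zeta <= gam * tau%:R * ell * zeta.
  apply: ler_wpM2r; first by rewrite zetaE.
  by apply: ler_wpM2l mu_ell; rewrite mulr_ge0 ?ler0n // ltW.
by rewrite zetaE; lra.
Qed.

Lemma sync_iter_geometric (R : realType) n (d : 'I_n -> nat)
    (G : forall i : 'I_n, joint R d -> 'rV[R]_(d i)) (gam : nat -> R) tau
    (xs x0 : joint R d) (r : R) :
  0 <= r ->
  (forall x p, jnorm2 (jsub (fun i => local_iter G gam tau p x i tau) xs)
                 <= r * jnorm2 (jsub x xs)) ->
  forall p, jnorm2 (jsub (sync_iter G gam tau x0 p) xs) <= r ^+ p * jnorm2 (jsub x0 xs).
Proof.
move=> r0 round; elim=> [|p IH]; first by rewrite expr0 mul1r.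
by apply: le_trans (round _ p) _; rewrite exprS -mulrA ler_wpM2l.
Qed.

Lemma pearl_iter_mul (R : realType) n (d : 'I_n -> nat)
    (G : forall i : 'I_n, joint R d -> 'rV[R]_(d i)) (gam : nat -> R) tau (x0 : joint R d) p :
  (0 < tau)%N -> pearl_iter G gam tau x0 (tau * p) = sync_iter G gam tau x0 p.
Proof. by move=> tau0; rewrite /pearl_iter mulKn // modnMr. Qed.

Theorem theorem1 (R : realType) (n : nat) (d : 'I_n -> nat)
  (f : 'I_n -> joint R d -> R) (G : forall i : 'I_n, joint R d -> 'rV[R]_(d i))
  (L : 'I_n -> R) (xs : joint R d) (mu ell : R)
  (tau Rr : nat) (gam : R) (x0 : joint R d) :
  (0 < n)%N -> (forall i, (0 < d i)%N) ->
  is_partial_grad f G -> CVX f -> SM G L -> QSM G xs mu -> SCO G xs ell ->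
  (1 <= tau)%N -> (1 <= Rr)%N ->
  let Lmax := \big[Num.max/0]_(i < n) L i in
  let kappa := ell / mu in
  0 < gam ->
  gam <= (ell * tau%:R + 2 * (tau%:R - 1) * Lmax * Num.sqrt kappa)^-1 ->
  let zeta := 2 - gam * ell * tau%:R - 2 * (tau%:R - 1) * gam * Lmax * Num.sqrt (kappa / 3) in
  jnorm2 (jsub (pearl_iter G (fun _ => gam) tau x0 (tau * Rr)%N) xs)
    <= (1 - gam * tau%:R * mu * zeta) ^+ Rr * jnorm2 (jsub x0 xs).
Proof.
move=> n0 d0 Hgrad Hcvx Hsm Hq Hs tau1 _ Lmax kappa gam0 step; cbv zeta.
have mu_ell := qsm_sco_mu_le_ell n0 d0 Hq Hs.
have [_ [_ [mu0 _]]] := Hq.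
have L_le i : L i <= Lmax by rewrite /Lmax (bigD1 i) //= le_max lexx.
have Lmax0 : 0 <= Lmax.
  by have [/ltW L0 _] := Hsm (Ordinal n0); apply: le_trans L0 (L_le _).
have [m_half zeta0 zeta_le rate0] := pearl_step_size gam0 mu0 mu_ell Lmax0 tau1 step.
rewrite pearl_iter_mul //; apply: sync_iter_geometric rate0 _ Rr => x p.
exact: round_contraction Hgrad Hcvx Hsm tau1 gam0 Lmax0 L_le m_half x p mu ell _ Hq Hs
  zeta0 zeta_le.
Qed.
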